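(* For all integers $r, k \geq 1$, we have $s_r(K_{k+1}) \geq P_r(k)$.
   Context: All graphs are finite and simple. For graphs $G,H$ and an integer $r\ge 1$, write $G \rightarrow (H)_r$ if every colouring of the edges of $G$ with $r$ colours contains a monochromatic copy of $H$. A graph $G$ is $r$-Ramsey-minimal for $H$ if $G \rightarrow (H)_r$ but no proper subgraph $G'\subsetneq G$ satisfies $G' \rightarrow (H)_r$. Define $s_r(H) := \min \delta(G)$ over all graphs $G$ that are $r$-Ramsey-minimal for $H$, where $\delta$ denotes minimum degree. A colour pattern on a vertex set $V$ is a sequence $G_1,\dots,G_r$ of pairwise edge-disjoint graphs all having vertex set $V$; it is $H$-free if no $G_i$ contains $H$ as a subgraph. Given a colour pattern $G_1,\dots,G_r$ on $V$ and a colouring $c: V \to [r]$, a strongly monochromatic $K_k$ is a set of $k$ vertices all receiving the same colour $i$ under $c$ and forming a clique in $G_i$. $P_r(k)$ is the smallest integer $n$ such that there exists a $K_{k+1}$-free colour pattern $G_1,\dots,G_r$ on an $n$-element vertex set $V$ such that every colouring $V \to [r]$ yields a strongly monochromatic $K_k$. *)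

From mathcomp Require Import all_boot.
Set Implicit Arguments. Unset Strict Implicit. Unset Printing Implicit Defensive.

(* A finite simple graph on a vertex set A : {set T} (T a finType) is given by
   an edge relation E : rel T that is symmetric and irreflexive and whose
   edges lie inside A.  A whole graph on T uses A = [set: T]. *)
Definition simple_rel (T : finType) (E : rel T) : Prop :=
  (forall x y, E x y = E y x) /\ (forall x, ~~ E x x).

Definition rel_on (T : finType) (A : {set T}) (E : rel T) : Prop :=
  forall x y, E x y -> (x \in A) && (y \in A).

Definition is_clique (T : finType) (E : rel T) (S : {set T}) : Prop :=
  forall x y, x \in S -> y \in S -> x != y -> E x y.

(* An r-edge-colouring of a graph assigns to each edge {x,y} (as the
   2-element set [set x; y]) a colour in 'I_r; it is given as a function on
   all of {set T}, only its values on edges matter. *)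
Definition arrows_clique (T : finType) (r k : nat) (A : {set T}) (E : rel T)
  : Prop :=
  forall c : {set T} -> 'I_r,
    exists (i : 'I_r) (S : {set T}),
      [/\ S \subset A, #|S| = k.+1 &
          forall x y, x \in S -> y \in S -> x != y ->
            E x y /\ c [set x; y] = i].

Definition subgraph (T : finType) (A' : {set T}) (E' : rel T)
  (A : {set T}) (E : rel T) : Prop :=
  [/\ simple_rel E', rel_on A' E', A' \subset A & forall x y, E' x y -> E x y].

Definition proper_subgraph (T : finType) (A' : {set T}) (E' : rel T)
  (A : {set T}) (E : rel T) : Prop :=
  subgraph A' E' A E /\ (A' != A \/ exists x y, E x y && ~~ E' x y).

Definition ramsey_minimal_clique (T : finType) (r k : nat) (E : rel T) : Prop :=
  arrows_clique r k [set: T] E /\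
  forall (A' : {set T}) (E' : rel T),
    proper_subgraph A' E' [set: T] E -> ~ arrows_clique r k A' E'.

Definition degree (T : finType) (E : rel T) (v : T) : nat := #|[set y | E v y]|.

Definition colour_pattern (r n : nat) (G : 'I_r -> rel 'I_n) : Prop :=
  (forall i, simple_rel (G i)) /\
  (forall i j x y, i != j -> G i x y -> ~~ G j x y).

Definition pattern_clique_free (r n m : nat) (G : 'I_r -> rel 'I_n) : Prop :=
  forall (i : 'I_r) (S : {set 'I_n}), #|S| = m -> ~ is_clique (G i) S.

Definition forces_strong_mono (r n k : nat) (G : 'I_r -> rel 'I_n) : Prop :=
  forall c : 'I_n -> 'I_r,
    exists (i : 'I_r) (S : {set 'I_n}),
      [/\ #|S| = k, (forall x, x \in S -> c x = i) & is_clique (G i) S].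

(* n is admissible in the definition of P_r(k); P_r(k) is the least such n. *)
Definition Pr_admissible (r k n : nat) : Prop :=
  exists G : 'I_r -> rel 'I_n,
    [/\ colour_pattern G, pattern_clique_free k.+1 G & forces_strong_mono k G].

From mathcomp Require Import all_boot.
From Stdlib Require Import Classical.

Set Implicit Arguments.
Unset Strict Implicit.
Unset Printing Implicit Defensive.

(* Let G be r-Ramsey-minimal for K_{k+1} and v a vertex.  By minimality G - v
   has an edge colouring c without a monochromatic K_{k+1}.  On the
   neighbourhood N(v), colour pattern i consists of the edges coloured i by c;
   it is K_{k+1}-free because c is.  Given any vertex colouring of N(v), colour
   each edge vx by the colour of x: the resulting colouring of G has a
   monochromatic K_{k+1}, which must contain v, and removing v leaves a
   strongly monochromatic K_k.  Hence deg v is admissible for P_r(k). *)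

Section Cliques.

Variables (T : finType) (r k : nat).

Definition mono_clique (A : {set T}) (E : rel T) (c : {set T} -> 'I_r)
    (i : 'I_r) (S : {set T}) : Prop :=
  [/\ S \subset A, #|S| = k.+1 &
      forall x y, x \in S -> y \in S -> x != y -> E x y /\ c [set x; y] = i].

Lemma not_arrows_clique (A : {set T}) (E : rel T) :
  ~ arrows_clique r k A E ->
  exists c : {set T} -> 'I_r, forall i S, ~ mono_clique A E c i S.
Proof.
move=> notA; apply: NNPP => noc; apply: notA => c.
apply: NNPP => nomono; apply: noc; exists c => i S monoS.
by apply: nomono; exists i, S.
Qed.

End Cliques.

Section DeleteVertex.

Variables (T : finType) (E : rel T) (v : T).

Definition del_vertex : rel T := fun x y => [&& x != v, y != v & E x y].

Lemma del_vertex_proper_subgraph :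
  simple_rel E -> proper_subgraph [set x | x != v] del_vertex [set: T] E.
Proof.
move=> [Esym Eirr]; split; last first.
  by left; apply/eqP => /setP/(_ v); rewrite !inE eqxx.
split; [split | | exact: subsetT | by move=> x y /and3P[]].
- by move=> x y; rewrite /del_vertex Esym andbCA.
- by move=> x; rewrite /del_vertex (negbTE (Eirr x)) !andbF.
- by move=> x y /and3P[xv yv _]; rewrite !inE xv yv.
Qed.

Variables (r : nat) (cv : T -> 'I_r) (c : {set T} -> 'I_r).

(* Edges through v take the colour of their other end, all others keep c. *)
Definition star_colouring (S : {set T}) : 'I_r :=
  if v \in S then cv (odflt v [pick x in S :\ v]) else c S.

Lemma star_colouring_star x : x != v -> star_colouring [set v; x] = cv x.
Proof.
move=> xv; rewrite /star_colouring !inE eqxx /=.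
have -> : [set v; x] :\ v = [set x].
  apply/setP => y; rewrite !inE; case: (eqVneq y v) => [->|//].
  by rewrite eq_sym (negbTE xv).
by case: pickP => [y|/(_ x)]; rewrite inE ?eqxx // => /eqP ->.
Qed.

Lemma star_colouring_off x y :
  x != v -> y != v -> star_colouring [set x; y] = c [set x; y].
Proof.
by move=> xv yv; rewrite /star_colouring !inE eq_sym (negbTE xv) eq_sym (negbTE yv).
Qed.

Lemma mono_clique_star_avoiding k i (S : {set T}) :
  v \notin S -> mono_clique k [set: T] E star_colouring i S ->
  mono_clique k [set x | x != v] del_vertex c i S.
Proof.
move=> vS [_ cardS monoS].
have notv x : x \in S -> x != v by move=> xS; apply: contraNneq vS => <-.
split=> //.
  by apply/subsetP => x xS; rewrite inE notv.
move=> x y xS yS xy; have [Exy cxy] := monoS x y xS yS xy.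
by rewrite /del_vertex !notv // Exy -star_colouring_off ?notv.
Qed.

End DeleteVertex.

Section Neighbourhood.

Variables (T : finType) (E : rel T) (v : T).

Definition nbr : {set T} := [set y | E v y].

Definition nbr_enum : 'I_#|nbr| -> T := enum_val.

Lemma nbr_enum_inj : injective nbr_enum.
Proof. exact: enum_val_inj. Qed.

Lemma nbr_enum_adj a : E v (nbr_enum a).
Proof. by have := enum_valP a; rewrite inE. Qed.

Lemma nbr_enum_neq a : ~~ E v v -> nbr_enum a != v.
Proof.
by move=> Evv; apply/eqP => av; have := nbr_enum_adj a; rewrite av (negbTE Evv).
Qed.

Lemma nbr_enum_preimageK (S : {set T}) :
  S \subset nbr -> nbr_enum @: (nbr_enum @^-1: S) = S.
Proof.
move=> /subsetP SN; apply/setP => x; apply/imsetP/idP => [[a] | xS].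
  by rewrite inE => aS ->.
have xN := SN x xS; exists (enum_rank_in xN x); last by rewrite /nbr_enum enum_rankK_in.
by rewrite inE /nbr_enum enum_rankK_in.
Qed.

Variables (r : nat) (c : {set T} -> 'I_r).

Definition link_pattern (i : 'I_r) : rel 'I_#|nbr| :=
  fun a b => E (nbr_enum a) (nbr_enum b) && (c [set nbr_enum a; nbr_enum b] == i).

Lemma link_pattern_colour_pattern : simple_rel E -> colour_pattern link_pattern.
Proof.
move=> [Esym Eirr]; split=> [i | i j a b ij /andP[_ /eqP cab]].
  split=> [a b | a]; first by rewrite /link_pattern Esym setUC.
  by rewrite /link_pattern (negbTE (Eirr _)).
by rewrite /link_pattern cab (negbTE ij) andbF.
Qed.

Lemma link_pattern_clique_free k :
  ~~ E v v -> (forall i S, ~ mono_clique k [set x | x != v] (del_vertex E v) c i S) ->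
  pattern_clique_free k.+1 link_pattern.
Proof.
move=> Evv noMono i S cardS cliqueS; apply: (noMono i (nbr_enum @: S)); split.
- by apply/subsetP => _ /imsetP[a _ ->]; rewrite inE nbr_enum_neq.
- by rewrite card_imset //; exact: nbr_enum_inj.
move=> _ _ /imsetP[a aS ->] /imsetP[b bS ->] fab.
have ab : a != b by apply: contraNneq fab => ->.
have /andP[Eab /eqP cab] := cliqueS a b aS bS ab.
by rewrite /del_vertex !nbr_enum_neq.
Qed.

Lemma link_pattern_forces k :
  ~~ E v v -> arrows_clique r k [set: T] E ->
  (forall i S, ~ mono_clique k [set x | x != v] (del_vertex E v) c i S) ->
  forces_strong_mono k link_pattern.
Proof.
move=> Evv arrE noMono cN.
pose cv x := if [pick a | nbr_enum a == x] is Some a then cN a else c set0.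
have cv_enum a : cv (nbr_enum a) = cN a.
  rewrite /cv; case: pickP => [b /eqP /nbr_enum_inj -> // | /(_ a)].
  by rewrite eqxx.
have [i [S monoS]] := arrE (star_colouring v cv c).
have vS : v \in S.
  apply/negPn/negP => vS; apply: (noMono i S).
  exact: (mono_clique_star_avoiding vS monoS).
have [_ cardS edgeS] := monoS.
have SvN : S :\ v \subset nbr.
  apply/subsetP => x; rewrite !inE => /andP[xv xS].
  by have [] := edgeS v x vS xS; rewrite 1?eq_sym.
exists i, (nbr_enum @^-1: (S :\ v)); split.
- apply/eqP; rewrite -eqSS -cardS (cardsD1 v S) vS add1n eqSS.
  by rewrite -(card_imset _ nbr_enum_inj) nbr_enum_preimageK.
- move=> a; rewrite !inE => /andP[_ aS].
  have va : v != nbr_enum a by rewrite eq_sym nbr_enum_neq.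
  have [_] := edgeS v _ vS aS va.
  by rewrite star_colouring_star ?nbr_enum_neq // cv_enum.
- move=> a b; rewrite !inE => /andP[_ aS] /andP[_ bS] ab.
  have fab : nbr_enum a != nbr_enum b by apply: contra ab => /eqP /nbr_enum_inj ->.
  have [Eab] := edgeS _ _ aS bS fab.
  by rewrite star_colouring_off ?nbr_enum_neq // /link_pattern Eab => ->; rewrite eqxx.
Qed.

End Neighbourhood.

Arguments link_pattern {T} E v {r} c i _ _.

Theorem lemma2p1 (r k : nat) (hr : 0 < r) (hk : 0 < k)
  (T : finType) (E : rel T) (hE : simple_rel E)
  (hmin : ramsey_minimal_clique r k E) :
  forall v : T, exists2 n : nat, Pr_admissible r k n & n <= degree E v.
Proof.
move=> v; exists (degree E v) => //.
have [arrE minE] := hmin.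
have Evv : ~~ E v v by case: hE.
have [c noMono] := not_arrows_clique (minE _ _ (del_vertex_proper_subgraph v hE)).
exists (link_pattern E v c); split.
- exact: link_pattern_colour_pattern.
- exact: link_pattern_clique_free.
- exact: link_pattern_forces.
Qed.
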